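(* Consider the algorithm SR-DFF run with input $m$ on a stream consistent with a representation $\mathcal{G}$ of size $m$ with at most $k$ exceptions. At all times during the run, if $C[\hat x]$ is a valid and non-corrupted rule, then: (i) the conjunction $C[\hat x]$ is satisfied by every example in $G(\hat x)$; and (ii) for every feature $\phi$ in $C[\hat x]$, there is some valid example $x\in\mathcal{X}$ such that $\phi(G(\hat x),G(x))=\phi$.
   Context: Setting. $\mathcal{X}$ is a domain, $\mathcal{Y}$ a finite label set, $\Phi$ a set of binary features on $\mathcal{X}$ closed under negation. A representation of size $m$ is a cover $\mathcal{G}=\{G_1,\dots,G_m\}$ of $\mathcal{X}$ by components with labels $\ell(G)$; each $x$ has a fixed component $G(x)\ni x$; $c^*(x)=\ell(G(x))$; for components $G_i,G_j$ with different labels there is $\phi(G_i,G_j)\in\Phi$ true on all of $G_i$ and false on all of $G_j$, with $\phi(G_j,G_i)=\neg\phi(G_i,G_j)$. Protocol: the learner first gets $x_0$ with label $y_0$; then each example $x_t$ arrives, the learner predicts a label with an explanation example previously seen with that label; on a mistake the teacher gives $y_t=c^*(x_t)$ and $\phi(G(x_t),G(\hat x_t))$, $\hat x_t$ the explanation. An exception is an example on which the feedback is inconsistent with the representation/protocol; a stream is consistent with $\mathcal{G}$ with at most $k$ exceptions if at most $k$ examples are exceptions. Non-exception examples are called valid. SR-DFF (input $m$): receives $(x_0,y_0)$; maintains a list $L$ of rules, each indexed by a representative example $x$, with a conjunction $C[x]$ of features and a label $\texttt{label}[x]$. On $x_t$: if some $C[\hat x]\in L$ is satisfied by $x_t$,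 predict $\texttt{label}[\hat x]$ with explanation $\hat x$; if incorrect, receive $y_t,\phi$, set $C[\hat x]:=C[\hat x]\wedge\neg\phi$, and delete the rule if $C[\hat x]$ has at least $m$ features. Otherwise predict $y_0$ with explanation $x_0$; if incorrect, receive $y_t,\phi$ and add a new rule with empty conjunction $C[x_t]$ and $\texttt{label}[x_t]=y_t$. A rule $C[x]$ is valid if $x$ is a valid example (it is created by an exception if $x$ is an exception). A rule is corrupted if at least one of the features in its conjunction was added during a refinement step triggered by an example $x_t$ that was an exception. *)

From mathcomp Require Import all_boot.
Set Implicit Arguments. Unset Strict Implicit. Unset Printing Implicit Defensive.

Section SRDFF.
Variables (X : Type) (Y : eqType) (F : eqType).
Variables (eval : F -> X -> bool) (neg : F -> F).

(* A rule of the list L, with ghost bookkeeping: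
   rep   = representative example x (the rule is C[x]),
   born  = index in the trace of the step that created the rule,
   conj  = the conjunction C[x] (list of features),
   lbl   = label[x],
   refs  = indices in the trace of the steps that triggered refinements. *)
Record rule := Rule { rep : X; born : nat; conj : seq F; lbl : Y; refs : seq nat }.

(* One round of the protocol after (x0,y0): example ex, predicted label plab
   with explanation pexp, and the teacher feedback fb
   (None = prediction declared correct; Some (y, phi) = mistake with feedback). *)
Record step := Step { ex : X; plab : Y; pexp : X; fb : option (Y * F) }.

Definition sat (C : seq F) (x : X) : bool := all (fun f => eval f x) C.

Variables (m : nat) (x0 : X) (y0 : Y).

Definition refine_rule (t : nat) (r : rule) (o : option (Y * F)) : seq rule :=
  match o with
  | None => [:: r]
  | Some (_, f) =>
      let C := rcons (conj r) (neg f) in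
      if m <= size C then [::]
      else [:: Rule (rep r) (born r) C (lbl r) (rcons (refs r) t)]
  end.

Definition new_rule (t : nat) (s : step) : seq rule :=
  match fb s with
  | None => [::]
  | Some (y, _) => [:: Rule (ex s) t [::] y [::]]
  end.

(* [run tr L]: after processing the rounds tr (in order; round of index t is
   the t-th element of tr), the list of rules may be L.  The choice among
   several satisfied rules is left nondeterministic. *)
Inductive run : seq step -> seq rule -> Prop :=
| run_nil : run [::] [::]
| run_rule tr L1 r L2 s :
    run tr (L1 ++ r :: L2) ->
    sat (conj r) (ex s) -> plab s = lbl r -> pexp s = rep r ->
    run (rcons tr s) (L1 ++ refine_rule (size tr) r (fb s) ++ L2)
| run_default tr L s :
    run tr L ->
    ~~ has (fun r => sat (conj r) (ex s)) L ->
    plab s = y0 -> pexp s = x0 ->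
    run (rcons tr s) (L ++ new_rule (size tr) s).

Definition is_representation (comp : 'I_m -> X -> bool) (G : X -> 'I_m)
  (lab : 'I_m -> Y) (phi : 'I_m -> 'I_m -> F) : Prop :=
  (forall x, comp (G x) x) /\
  (forall i j, lab i != lab j ->
     (forall x, comp i x -> eval (phi i j) x) /\
     (forall x, comp j x -> ~~ eval (phi i j) x)) /\
  (forall i j, lab i != lab j -> phi j i = neg (phi i j)).

Variables (G : X -> 'I_m) (lab : 'I_m -> Y) (phi : 'I_m -> 'I_m -> F).

(* A round is valid (non-exception) iff the feedback is the one of the
   truthful teacher for the representation. *)
Definition valid_step (s : step) : bool :=
  let c := lab (G (ex s)) in
  if plab s == c then fb s == None
  else (c != lab (G (pexp s))) && (fb s == Some (c, phi (G (ex s)) (G (pexp s)))).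

Definition valid_at (tr : seq step) (t : nat) : bool :=
  if ohead (drop t tr) is Some s then valid_step s else false.

Definition exception_at (tr : seq step) (t : nat) : bool :=
  if ohead (drop t tr) is Some s then ~~ valid_step s else false.

Definition num_exceptions (tr : seq step) : nat :=
  (y0 != lab (G x0)) + count (fun s => ~~ valid_step s) tr.

Definition valid_example (tr : seq step) (x : X) : Prop :=
  (x = x0 /\ y0 = lab (G x0)) \/
  (exists t s, ohead (drop t tr) = Some s /\ ex s = x /\ valid_step s).

Definition valid_rule (tr : seq step) (r : rule) : bool := valid_at tr (born r).

Definition corrupted (tr : seq step) (r : rule) : bool :=
  has (exception_at tr) (refs r).

End SRDFF.

From mathcomp Require Import all_boot.
From Stdlib Require List.

(* A rule C[x^] is created with the empty conjunction, and a valid mistake on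
   x_t explained by x^ adds neg phi(G(x_t), G(x^)) = phi(G(x^), G(x_t)) to it;
   this feature holds on all of G(x^) and is witnessed by the valid example x_t.
   A non-corrupted rule was only ever refined by valid mistakes, so both
   properties are an invariant of the run. *)

Lemma ohead_drop_rcons {T : Type} {s : seq T} (a : T) {b : T} {t : nat} :
  ohead (drop t s) = Some b -> ohead (drop t (rcons s a)) = Some b.
Proof. by elim: s t => [|c s IHs] [|t] //= /IHs. Qed.

Lemma ohead_drop_size_rcons {T : Type} (s : seq T) (a : T) :
  ohead (drop (size s) (rcons s a)) = Some a.
Proof. by elim: s. Qed.

Section Invariant.

Context {X : Type} {Y F : eqType} {eval : F -> X -> bool} {neg : F -> F}.
Context {m : nat} {x0 : X} {y0 : Y}.
Context {comp : 'I_m -> X -> bool} {G : X -> 'I_m}.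
Context {lab : 'I_m -> Y} {phi : 'I_m -> 'I_m -> F}.

Hypothesis phi_true : forall i j, lab i != lab j ->
  forall x, comp i x -> eval (phi i j) x.
Hypothesis phi_antisym : forall i j, lab i != lab j -> phi j i = neg (phi i j).

Local Notation rule := (rule X Y F).
Local Notation step := (step X Y F).

Definition conj_sound (r : rule) : Prop :=
  forall x, comp (G (rep r)) x -> sat eval (conj r) x.

Definition conj_explained (tr : seq step) (r : rule) : Prop :=
  forall f, f \in conj r ->
    exists x, valid_example x0 y0 G lab phi tr x /\ phi (G (rep r)) (G x) = f.

Definition sound_rule (tr : seq step) (r : rule) : Prop :=
  conj_sound r /\ conj_explained tr r.

Lemma exception_at_rcons tr s t :
  exception_at G lab phi tr t -> exception_at G lab phi (rcons tr s) t.
Proof.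
by rewrite /exception_at; case E: (ohead _) => [s'|] //; rewrite (ohead_drop_rcons s E).
Qed.

Lemma corrupted_rcons tr s r :
  ~~ corrupted G lab phi (rcons tr s) r -> ~~ corrupted G lab phi tr r.
Proof. by apply: contra; apply: sub_has => t; apply: exception_at_rcons. Qed.

Lemma valid_example_rcons tr s x :
  valid_example x0 y0 G lab phi tr x -> valid_example x0 y0 G lab phi (rcons tr s) x.
Proof.
case=> [|[t [s' [E valid_s']]]]; first by left.
by right; exists t, s'; rewrite (ohead_drop_rcons s E).
Qed.

Lemma valid_example_last tr s :
  valid_step G lab phi s -> valid_example x0 y0 G lab phi (rcons tr s) (ex s).
Proof. by move=> valid_s; right; exists (size tr), s; rewrite ohead_drop_size_rcons. Qed.

Lemma sound_rule_rcons {tr} s {r} : sound_rule tr r -> sound_rule (rcons tr s) r.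
Proof.
move=> [sound_r expl_r]; split=> // f /expl_r [x [valid_x phi_x]].
by exists x; split; first exact: valid_example_rcons.
Qed.

Lemma valid_mistake_feature {s y f} :
  valid_step G lab phi s -> fb s = Some (y, f) ->
  lab (G (pexp s)) != lab (G (ex s)) /\ neg f = phi (G (pexp s)) (G (ex s)).
Proof.
rewrite /valid_step => + fb_s; rewrite fb_s; case: eqP => // _.
by case/andP=> lab_neq /eqP [_ ->]; rewrite eq_sym (phi_antisym _ _ lab_neq).
Qed.

Lemma sound_rule_refined {tr s r y f} :
  valid_step G lab phi s -> fb s = Some (y, f) -> pexp s = rep r ->
  sound_rule tr r ->
  sound_rule (rcons tr s)
    (Rule (rep r) (born r) (rcons (conj r) (neg f)) (lbl r) (rcons (refs r) (size tr))).
Proof.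
move=> valid_s fb_s pexp_s sound_r.
have [lab_neq negf] := valid_mistake_feature valid_s fb_s.
rewrite pexp_s in lab_neq negf.
have [sound_r' expl_r'] := sound_rule_rcons s sound_r.
split=> [x x_comp | f'] /=.
  by rewrite /sat all_rcons negf (phi_true _ _ lab_neq _ x_comp); exact: sound_r'.
rewrite mem_rcons inE => /orP[/eqP -> | /expl_r' //].
by exists (ex s); split; [exact: valid_example_last | rewrite negf].
Qed.

Lemma refine_rule_sound {tr s r r'} :
  pexp s = rep r -> (~~ corrupted G lab phi tr r -> sound_rule tr r) ->
  List.In r' (refine_rule neg m (size tr) r (fb s)) ->
  ~~ corrupted G lab phi (rcons tr s) r' -> sound_rule (rcons tr s) r'.
Proof.
move=> pexp_s IHr; rewrite /refine_rule.
case fb_s: (fb s) => [[y f]|]; last first.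
  by case=> [<- /corrupted_rcons /IHr|[]]; exact: sound_rule_rcons.
case: ifP => _ //= [<- | []].
rewrite /corrupted /= has_rcons negb_or /exception_at ohead_drop_size_rcons negbK.
case/andP=> valid_s /corrupted_rcons /IHr.
exact: sound_rule_refined valid_s fb_s pexp_s.
Qed.

Lemma new_rule_sound tr s r :
  List.In r (new_rule (size tr) s) -> sound_rule (rcons tr s) r.
Proof. by rewrite /new_rule; case: (fb s) => [[y f]|] //= [<- | []]. Qed.

Lemma run_sound {tr L} :
  run eval neg m x0 y0 tr L ->
  List.Forall (fun r => ~~ corrupted G lab phi tr r -> sound_rule tr r) L.
Proof.
have lift tr' s L' :
    List.Forall (fun r => ~~ corrupted G lab phi tr' r -> sound_rule tr' r) L' ->
    List.Forall (fun r => ~~ corrupted G lab phi (rcons tr' s) r ->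
                          sound_rule (rcons tr' s) r) L'.
  apply: List.Forall_impl => r IHr /corrupted_rcons /IHr; exact: sound_rule_rcons.
elim=> {tr L} [|tr L1 r L2 s _ IH _ _ pexp_s|tr L s _ IH _ _ _].
- exact: List.Forall_nil.
- move/List.Forall_app: IH => [IH1 /List.Forall_cons_iff [IHr IH2]].
  apply/List.Forall_app; split; first exact: lift.
  apply/List.Forall_app; split; last exact: lift.
  by apply/List.Forall_forall => r' /(refine_rule_sound pexp_s IHr).
- apply/List.Forall_app; split; first exact: lift.
  by apply/List.Forall_forall => r' /new_rule_sound.
Qed.

End Invariant.

Theorem lemma1 (X : Type) (Y : finType) (F : eqType)
  (eval : F -> X -> bool) (neg : F -> F)
  (Hneg : forall f x, eval (neg f) x = ~~ eval f x)
  (m : nat) (comp : 'I_m -> X -> bool) (G : X -> 'I_m)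
  (lab : 'I_m -> Y) (phi : 'I_m -> 'I_m -> F)
  (Hrep : is_representation eval neg comp G lab phi)
  (k : nat) (x0 : X) (y0 : Y) (tr : seq (step X Y F)) (L : seq (rule X Y F))
  (Hrun : run eval neg m x0 y0 tr L)
  (Hk : num_exceptions x0 y0 G lab phi tr <= k) :
  forall L1 r L2, L = L1 ++ r :: L2 ->
    valid_rule G lab phi tr r -> ~~ corrupted G lab phi tr r ->
    (forall x, comp (G (rep r)) x -> sat eval (conj r) x) /\
    (forall f, f \in conj r ->
       exists x, valid_example x0 y0 G lab phi tr x /\ phi (G (rep r)) (G x) = f).
Proof.
move=> L1 r L2 def_L _ not_corrupted; case: Hrep => _ [separates antisym].
have phi_true i j : lab i != lab j -> forall x, comp i x -> eval (phi i j) x.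
  by move=> /separates[].
rewrite def_L in Hrun.
have /List.Forall_app[_ /List.Forall_cons_iff[sound_r _]] :=
  run_sound (G := G) phi_true antisym Hrun.
exact: sound_r not_corrupted.
Qed.
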